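(* Let $\sigma(x,y)=(x\rightharpoonup y,x\leftharpoonup y)$ be an involutive non-degenerate quiver-theoretic Yang--Baxter map on a quiver $\mathscr{A}$ over $\Lambda$, let $x\star y:=(x\rightharpoonup\cdot)^{-1}(y)$ for $\mathfrak{s}(x)=\mathfrak{s}(y)$, and let $E$ be the closure of (the image of) $\mathscr{A}$ under right-lcms in the structure category $\mathscr{C}(\sigma)$. For $\lambda\in\Lambda$ and a finite set $I=\{x_1,\dots,x_n\}\subseteq\mathscr{A}(\lambda,\Lambda)$ of pairwise distinct arrows, define $\Omega_1(x_1)=x_1$, $\Omega_i(x_1,\dots,x_i)=\Omega_{i-1}(x_1,\dots,x_{i-1})\star\Omega_{i-1}(x_1,\dots,x_{i-2},x_i)$ for $2\le i\le n$, and $\Delta_I=[\Omega_1(x_1)|\Omega_2(x_1,x_2)|\dots|\Omega_n(x_1,\dots,x_n)]\in\mathscr{C}(\sigma)$ (this element is the right-lcm of $I$ and does not depend on the ordering of $I$). Then $E=\{\Delta_I\mid\lambda\in\Lambda,\ I\subseteq\mathscr{A}(\lambda,\Lambda),\ 1\le|I|<\infty\}\cup\mathbf{1}_{\mathscr{A}}$, where $\mathbf{1}_{\mathscr{A}}=\{\mathbf{1}_\lambda\mid\lambda\in\Lambda\}$ is the set of identities of $\mathscr{C}(\sigma)$.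
   Context: A quiver-theoretic Yang--Baxter map is a source/target-preserving map $\sigma$ on composable pairs satisfying the braid relation; involutive: $\sigma^2=\mathrm{id}$; non-degenerate: all $x\rightharpoonup\cdot\colon\mathscr{A}(\mathfrak{t}(x),\Lambda)\to\mathscr{A}(\mathfrak{s}(x),\Lambda)$ and $\cdot\leftharpoonup y\colon\mathscr{A}(\Lambda,\mathfrak{s}(y))\to\mathscr{A}(\Lambda,\mathfrak{t}(y))$ bijective. $\mathscr{C}(\sigma)$ is the category presented by generators $\mathscr{A}$ and relations $x|y\sim(x\rightharpoonup y)|(x\leftharpoonup y)$; $[w]$ denotes the class of a path $w$. A right-lcm of elements is a common right-multiple that left-divides every common right-multiple. *)

From Stdlib Require Import List Relations ClassicalEpsilon.
Import ListNotations.
Set Implicit Arguments.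

(* A quiver over the vertex set L: arrows A with source s and target t.
   sigma(x,y) = (l x y, r x y) = (x -> y, x <- y); l and r are total functions
   but only their values on composable pairs (t x = s y) are ever used. *)

Definition s12 {A : Type} (l r : A -> A -> A) (p : A * A * A) : A * A * A :=
  let '(a, b, c) := p in (l a b, r a b, c).
Definition s23 {A : Type} (l r : A -> A -> A) (p : A * A * A) : A * A * A :=
  let '(a, b, c) := p in (a, l b c, r b c).

Record qYB (L A : Type) (s t : A -> L) (l r : A -> A -> A) : Prop := {
  qyb_src : forall x y, t x = s y -> s (l x y) = s x;
  qyb_mid : forall x y, t x = s y -> t (l x y) = s (r x y);
  qyb_tgt : forall x y, t x = s y -> t (r x y) = t y;
  qyb_braid : forall x y z, t x = s y -> t y = s z ->
    s12 l r (s23 l r (s12 l r (x, y, z))) = s23 l r (s12 l r (s23 l r (x, y, z)))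
}.

Definition involutive (L A : Type) (s t : A -> L) (l r : A -> A -> A) : Prop :=
  forall x y, t x = s y -> l (l x y) (r x y) = x /\ r (l x y) (r x y) = y.

Definition nondegenerate (L A : Type) (s t : A -> L) (l r : A -> A -> A) : Prop :=
  (forall x z, s z = s x -> exists! y, s y = t x /\ l x y = z) /\
  (forall y z, t z = t y -> exists! x, t x = s y /\ r x y = z).

Definition star (L A : Type) (s t : A -> L) (l : A -> A -> A) (x y : A) : A :=
  epsilon (inhabits x) (fun z => s z = t x /\ l x z = y).

(* Om (rev [x1;...;x_{i-1}]) x_i = Omega_i(x1,...,x_i) *)
Fixpoint Om (L A : Type) (s t : A -> L) (l : A -> A -> A) (rp : list A) (x : A) : A :=
  match rp with
  | [] => x
  | y :: rq => star s t l (Om s t l rq y) (Om s t l rq x)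
  end.

Fixpoint deltas (L A : Type) (s t : A -> L) (l : A -> A -> A) (acc rest : list A)
  : list A :=
  match rest with
  | [] => []
  | x :: rest' => Om s t l (rev acc) x :: deltas s t l (acc ++ [x]) rest'
  end.

Definition Delta (L A : Type) (s t : A -> L) (l : A -> A -> A) (I : list A) : list A :=
  deltas s t l [] I.

(* Paths in the quiver starting at a vertex lam; the empty path at lam is 1_lam. *)
Fixpoint is_path (L A : Type) (s t : A -> L) (lam : L) (w : list A) : Prop :=
  match w with
  | [] => True
  | x :: w' => s x = lam /\ is_path s t (t x) w'
  end.

Fixpoint tgt (L A : Type) (s t : A -> L) (lam : L) (w : list A) : L :=
  match w with
  | [] => lam
  | x :: w' => tgt s t (t x) w'
  end.

Inductive step (L A : Type) (s t : A -> L) (l r : A -> A -> A) : list A -> list A -> Prop :=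
| step_intro : forall p q x y, t x = s y ->
    step s t l r (p ++ x :: y :: q) (p ++ l x y :: r x y :: q).

(* the congruence defining C(sigma): [u] = [v] iff cequiv u v (same source) *)
Definition cequiv (L A : Type) (s t : A -> L) (l r : A -> A -> A) : relation (list A) :=
  clos_refl_sym_trans (list A) (step s t l r).

Definition ldiv (L A : Type) (s t : A -> L) (l r : A -> A -> A) (lam : L) (u v : list A)
  : Prop :=
  is_path s t lam u /\ is_path s t lam v /\
  exists z, is_path s t (tgt s t lam u) z /\ cequiv s t l r (u ++ z) v.

Definition is_right_lcm (L A : Type) (s t : A -> L) (l r : A -> A -> A) (lam : L)
  (F : list (list A)) (m : list A) : Prop :=
  is_path s t lam m /\
  (forall f, In f F -> ldiv s t l r lam f m) /\
  (forall m', is_path s t lam m' -> (forall f, In f F -> ldiv s t l r lam f m') ->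
     ldiv s t l r lam m m').

(* E: the closure of (the image of) A under right-lcms in C(sigma):
   the smallest set of elements (closed under ~) containing every [x], x in A,
   and containing a right-lcm of every finite family of its elements
   (with a common source) which admits one. *)
Inductive InE (L A : Type) (s t : A -> L) (l r : A -> A -> A) : L -> list A -> Prop :=
| InE_gen : forall x, InE s t l r (s x) [x]
| InE_lcm : forall lam F m, (forall f, In f F -> InE s t l r lam f) ->
    is_right_lcm s t l r lam F m -> InE s t l r lam m
| InE_equiv : forall lam u v, InE s t l r lam u -> cequiv s t l r u v ->
    InE s t l r lam v.

From Stdlib Require Import List Relations Permutation ClassicalEpsilon Lia.
Import ListNotations.

(** For a path [w = x1 … xn] let [heads w = [x1; x1 ⇀ x2; x1 ⇀ (x2 ⇀ x3); …]].
    The braid relation and involutivity make [heads] invariant, up to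
    permutation, under [x|y ~ (x ⇀ y)|(x ↼ y)], and every member of [heads w]
    can be brought to the front of [w]; nondegeneracy then cancels a common
    first arrow.  Hence [[u]] left-divides [[v]] iff [heads u] is a
    submultiset of [heads v], and [heads] identifies the elements of
    [C(σ)] with source λ with finite multisets of arrows out of λ.  Under this
    identification [Δ_I] corresponds to the set [I], right-lcms of sets are
    unions, so [E] consists exactly of the elements whose heads are pairwise
    distinct. *)

Definition submultiset {A : Type} (a b : list A) : Prop :=
  exists c, Permutation b (a ++ c).

Lemma submultiset_incl {A : Type} (a b : list A) : submultiset a b -> incl a b.
Proof.
  intros [c Hc] x Hx. apply (Permutation_in _ (Permutation_sym Hc)), in_or_app. auto.
Qed.

Lemma submultiset_NoDup {A : Type} (a b : list A) : submultiset a b -> NoDup b -> NoDup a.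
Proof. intros [c Hc] Hb. exact (NoDup_app_remove_r _ _ (Permutation_NoDup Hc Hb)). Qed.

Lemma NoDup_incl_submultiset {A : Type} (a b : list A) :
  NoDup a -> incl a b -> submultiset a b.
Proof.
  revert b; induction a as [|x a IH]; intros b Ha Hab.
  - exists b. reflexivity.
  - apply NoDup_cons_iff in Ha as [Hx Ha].
    destruct (in_split x b (Hab x (or_introl eq_refl))) as [b1 [b2 ->]].
    destruct (IH (b1 ++ b2) Ha) as [c Hc].
    + intros y Hy. apply in_or_app.
      destruct (in_app_or _ _ _ (Hab y (or_intror Hy))) as [H|[<-|H]]; tauto.
    + exists c. rewrite <- Permutation_middle. now apply perm_skip.
Qed.

Section HeadsInvariant.

Context {L A : Type} {s t : A -> L} {l r : A -> A -> A}.

Fixpoint heads (w : list A) : list A :=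
  match w with
  | [] => []
  | x :: w' => x :: map (l x) (heads w')
  end.

Definition act (w : list A) (e : A) : A := fold_right l e w.

Lemma heads_length w : length (heads w) = length w.
Proof. induction w; simpl; rewrite ?length_map; auto. Qed.

Lemma heads_app u z : heads (u ++ z) = heads u ++ map (act u) (heads z).
Proof.
  induction u as [|x u IH]; simpl.
  - now rewrite map_id.
  - now rewrite IH, map_app, map_map.
Qed.

Lemma path_app u : forall lam z,
  is_path s t lam (u ++ z) <-> is_path s t lam u /\ is_path s t (tgt s t lam u) z.
Proof. induction u as [|x u IH]; simpl; intros lam z; [tauto|]. rewrite IH. tauto. Qed.

Lemma tgt_app u : forall lam z, tgt s t lam (u ++ z) = tgt s t (tgt s t lam u) z.
Proof. induction u; simpl; auto. Qed.

Lemma cequiv_cons y u v : cequiv s t l r u v -> cequiv s t l r (y :: u) (y :: v).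
Proof.
  induction 1 as [u v [p q x z Hxz]| | |]; [|apply rst_refl|now apply rst_sym|].
  - apply rst_step, (step_intro s t l r (y :: p) q x z Hxz).
  - eapply rst_trans; eauto.
Qed.

Lemma cequiv_swap x y q :
  t x = s y -> cequiv s t l r (x :: y :: q) (l x y :: r x y :: q).
Proof. intros Hxy. apply rst_step, (step_intro s t l r [] q x y Hxy). Qed.

Lemma deltas_snoc I : forall acc y,
  deltas s t l acc (I ++ [y]) = deltas s t l acc I ++ [Om s t l (rev (acc ++ I)) y].
Proof.
  induction I as [|x I IH]; intros acc y; simpl.
  - now rewrite app_nil_r.
  - now rewrite IH, <- app_assoc.
Qed.

Lemma Delta_snoc I y : Delta s t l (I ++ [y]) = Delta s t l I ++ [Om s t l (rev I) y].
Proof. apply deltas_snoc. Qed.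

Hypothesis Hyb : qYB s t l r.

Lemma heads_src w : forall lam e, is_path s t lam w -> In e (heads w) -> s e = lam.
Proof.
  induction w as [|x w IH]; simpl; intros lam e Hw He; [contradiction|].
  destruct Hw as [Hx Hw], He as [<-|He]; [exact Hx|].
  apply in_map_iff in He as [e' [<- He']].
  rewrite (qyb_src Hyb); auto. symmetry. exact (IH _ _ Hw He').
Qed.

Lemma l_braid x y z :
  t x = s y -> t y = s z -> l x (l y z) = l (l x y) (l (r x y) z).
Proof.
  intros Hxy Hyz. pose proof (qyb_braid Hyb x y z Hxy Hyz) as H. simpl in H.
  injection H; congruence.
Qed.

Lemma step_path u v lam : step s t l r u v -> is_path s t lam u <-> is_path s t lam v.
Proof.
  intros [p q x y Hxy]. revert lam; induction p as [|a p IH]; intros lam; simpl.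
  - rewrite (qyb_src Hyb), (qyb_mid Hyb), (qyb_tgt Hyb) by exact Hxy.
    split; intros [? [? ?]]; repeat split; congruence.
  - now rewrite IH.
Qed.

Lemma cequiv_path u v lam : cequiv s t l r u v -> is_path s t lam u <-> is_path s t lam v.
Proof.
  induction 1 as [u v Huv| | |]; [now apply step_path|tauto|tauto|tauto].
Qed.

Lemma cequiv_cons_of_In_heads u lam e : is_path s t lam u -> In e (heads u) ->
  exists u', is_path s t (t e) u' /\ cequiv s t l r u (e :: u').
Proof.
  revert lam e; induction u as [|x u IH]; simpl; intros lam e Hu He; [contradiction|].
  destruct Hu as [Hx Hu], He as [<-|He].
  - exists u. split; [exact Hu|apply rst_refl].
  - apply in_map_iff in He as [e' [<- He']].
    destruct (IH _ _ Hu He') as [w [Hw Hc]].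
    assert (Hxe : t x = s e') by (symmetry; exact (heads_src _ _ _ Hu He')).
    exists (r x e' :: w). split.
    + simpl. rewrite (qyb_mid Hyb), (qyb_tgt Hyb) by exact Hxe. auto.
    + eapply rst_trans; [apply cequiv_cons, Hc|]. now apply cequiv_swap.
Qed.

Hypothesis Hinv : involutive s t l r.

Lemma step_heads u v lam : step s t l r u v -> is_path s t lam u ->
  Permutation (heads u) (heads v).
Proof.
  intros [p q x y Hxy]. revert lam; induction p as [|a p IH]; intros lam; simpl.
  - intros [_ [_ Hq]]. destruct (Hinv x y Hxy) as [Hl _]. rewrite Hl, !map_map.
    erewrite map_ext_in; [apply perm_swap|].
    intros e He. apply l_braid; [exact Hxy|].
    symmetry. exact (heads_src _ _ _ Hq He).
  - intros [_ Hp]. apply perm_skip, Permutation_map. exact (IH _ Hp).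
Qed.

Lemma cequiv_heads u v lam : cequiv s t l r u v -> is_path s t lam u ->
  Permutation (heads u) (heads v).
Proof.
  intros Huv; revert lam; induction Huv as [u v Huv|u|u v Huv IH|u v w Huv IH Hvw IH'];
    intros lam Hu.
  - exact (step_heads _ _ _ Huv Hu).
  - reflexivity.
  - symmetry. apply (IH lam). apply (cequiv_path _ _ _ Huv). exact Hu.
  - etransitivity; [exact (IH _ Hu)|]. apply (IH' lam), (cequiv_path _ _ _ Huv), Hu.
Qed.

Hypothesis Hnd : nondegenerate s t l r.

Lemma star_spec x q : s q = s x -> s (star s t l x q) = t x /\ l x (star s t l x q) = q.
Proof.
  intros Hq. apply (epsilon_spec (inhabits x) (fun z => s z = t x /\ l x z = q)).
  destruct (proj1 Hnd x q Hq) as [y [Hy _]]. eauto.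
Qed.

Lemma star_l x e : s e = t x -> star s t l x (l x e) = e.
Proof.
  intros He. destruct (proj1 Hnd x (l x e)) as [y [_ Hy]].
  { exact (qyb_src Hyb _ _ (eq_sym He)). }
  destruct (star_spec x (l x e)) as [H1 H2]; [exact (qyb_src Hyb _ _ (eq_sym He))|].
  transitivity y; [symmetry|]; apply Hy; auto.
Qed.

Lemma heads_cons_submultiset lam y u v :
  is_path s t lam (y :: u) -> is_path s t lam (y :: v) ->
  submultiset (heads (y :: u)) (heads (y :: v)) -> submultiset (heads u) (heads v).
Proof.
  intros [_ Hu] [_ Hv] [c Hc]. simpl in Hc. apply Permutation_cons_inv in Hc.
  exists (map (star s t l y) c).
  assert (Hcancel : forall w, is_path s t (t y) w ->
            map (star s t l y) (map (l y) (heads w)) = heads w).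
  { intros w Hw. rewrite map_map. rewrite <- (map_id (heads w)) at 2. apply map_ext_in.
    intros e He. exact (star_l _ _ (heads_src _ _ _ Hw He)). }
  rewrite <- (Hcancel v Hv), <- (Hcancel u Hu), <- map_app.
  now apply Permutation_map.
Qed.

Lemma ldiv_of_submultiset u : forall lam v, is_path s t lam u -> is_path s t lam v ->
  submultiset (heads u) (heads v) -> ldiv s t l r lam u v.
Proof.
  induction u as [|x u IH]; intros lam v Hu Hv Huv.
  - split; [constructor|]. split; [exact Hv|]. exists v. split; [exact Hv|apply rst_refl].
  - assert (Hx : In x (heads v)) by (apply (submultiset_incl _ _ Huv); left; reflexivity).
    destruct (cequiv_cons_of_In_heads _ _ _ Hv Hx) as [v' [Hv' Hc]].
    assert (Hxv' : is_path s t lam (x :: v')) by (apply (cequiv_path _ _ _ Hc), Hv).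
    assert (Hsub : submultiset (heads u) (heads v')).
    { apply (heads_cons_submultiset lam x); [exact Hu|exact Hxv'|].
      destruct Huv as [d Hd]. exists d.
      rewrite <- Hd. symmetry. exact (cequiv_heads _ _ _ Hc Hv). }
    destruct (IH _ _ (proj2 Hu) Hv' Hsub) as [_ [_ [z [Hz Hcz]]]].
    split; [exact Hu|]. split; [exact Hv|]. exists z. split; [exact Hz|].
    eapply rst_trans; [apply cequiv_cons, Hcz|]. now apply rst_sym.
Qed.

Lemma submultiset_of_ldiv lam u v : ldiv s t l r lam u v -> submultiset (heads u) (heads v).
Proof.
  intros [Hu [_ [z [Hz Hc]]]]. exists (map (act u) (heads z)).
  rewrite <- heads_app. symmetry. apply (cequiv_heads _ _ lam Hc), path_app. auto.
Qed.

Lemma cequiv_of_heads_perm lam u v : is_path s t lam u -> is_path s t lam v ->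
  Permutation (heads u) (heads v) -> cequiv s t l r u v.
Proof.
  intros Hu Hv Huv.
  destruct (ldiv_of_submultiset u lam v Hu Hv) as [_ [_ [z [Hz Hc]]]].
  { exists []. now rewrite app_nil_r. }
  assert (Hlen : length (u ++ z) = length u).
  { rewrite <- (heads_length (u ++ z)), <- (heads_length u). transitivity (length (heads v)).
    - apply Permutation_length, (cequiv_heads _ _ lam Hc), path_app. auto.
    - symmetry. exact (Permutation_length Huv). }
  rewrite length_app in Hlen.
  destruct z as [|e z]; [now rewrite app_nil_r in Hc|simpl in Hlen; lia].
Qed.

Lemma Om_spec lam I x : (forall y, In y I -> s y = lam) -> s x = lam ->
  s (Om s t l (rev I) x) = tgt s t lam (Delta s t l I) /\
  act (Delta s t l I) (Om s t l (rev I) x) = x.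
Proof.
  revert x; induction I as [|a I IH] using rev_ind; intros x HI Hx; [auto|].
  assert (HI' : forall y, In y I -> s y = lam) by (intros y Hy; apply HI, in_or_app; auto).
  assert (Ha : s a = lam) by (apply HI, in_or_app; simpl; auto).
  destruct (IH a HI' Ha) as [Has _], (IH x HI' Hx) as [Hxs Hxact].
  destruct (star_spec (Om s t l (rev I) a) (Om s t l (rev I) x)) as [Hs Hl];
    [congruence|].
  rewrite Delta_snoc, rev_app_distr, tgt_app. simpl. split; [exact Hs|].
  unfold act in *. rewrite fold_right_app. simpl. now rewrite Hl.
Qed.

Lemma Delta_path lam I : (forall x, In x I -> s x = lam) -> is_path s t lam (Delta s t l I).
Proof.
  induction I as [|a I IH] using rev_ind; intros HI; simpl; [constructor|].
  assert (HI' : forall y, In y I -> s y = lam) by (intros y Hy; apply HI, in_or_app; auto).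
  rewrite Delta_snoc. apply path_app. split; [exact (IH HI')|]. simpl. split; [|constructor].
  apply (Om_spec lam I a HI'), HI, in_or_app. simpl. auto.
Qed.

Lemma heads_Delta lam I : (forall x, In x I -> s x = lam) -> heads (Delta s t l I) = I.
Proof.
  induction I as [|a I IH] using rev_ind; intros HI; [reflexivity|].
  assert (HI' : forall y, In y I -> s y = lam) by (intros y Hy; apply HI, in_or_app; auto).
  assert (Ha : s a = lam) by (apply HI, in_or_app; simpl; auto).
  rewrite Delta_snoc, heads_app, (IH HI'). simpl.
  now rewrite (proj2 (Om_spec lam I a HI' Ha)).
Qed.

Lemma Delta_right_lcm lam I : NoDup I -> (forall x, In x I -> s x = lam) ->
  is_right_lcm s t l r lam (map (fun x => [x]) I) (Delta s t l I).
Proof.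
  intros HN HI. pose proof (Delta_path lam I HI) as HD.
  split; [exact HD|split].
  - intros f Hf. apply in_map_iff in Hf as [x [<- Hx]].
    apply ldiv_of_submultiset; [split; [exact (HI x Hx)|constructor]|exact HD|].
    rewrite (heads_Delta lam I HI). apply NoDup_incl_submultiset.
    + apply NoDup_cons; [auto|constructor].
    + intros y [<-|[]]. exact Hx.
  - intros m Hm Hdiv. apply ldiv_of_submultiset; [exact HD|exact Hm|].
    rewrite (heads_Delta lam I HI). apply (NoDup_incl_submultiset _ _ HN).
    intros x Hx. apply (submultiset_incl (heads [x])); [|simpl; auto].
    apply (submultiset_of_ldiv lam), Hdiv, (in_map (fun y => [y])), Hx.
Qed.

Lemma right_lcm_heads_NoDup lam F m :
  (forall f, In f F -> is_path s t lam f /\ NoDup (heads f)) ->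
  is_right_lcm s t l r lam F m -> NoDup (heads m).
Proof.
  intros HF [_ [_ Hmin]].
  set (U := nodup (fun x y : A => excluded_middle_informative (x = y))
                  (concat (map heads F))).
  assert (HU : forall x, In x U <-> exists f, In f F /\ In x (heads f)).
  { intros x. unfold U. rewrite nodup_In, in_concat. split.
    - intros [h [Hh Hx]]. apply in_map_iff in Hh as [f [<- Hf]]. eauto.
    - intros [f [Hf Hx]]. exists (heads f). split; [apply in_map|]; assumption. }
  assert (HUs : forall x, In x U -> s x = lam).
  { intros x [f [Hf Hx]]%HU. exact (heads_src f lam x (proj1 (HF f Hf)) Hx). }
  apply (submultiset_NoDup _ U); [|apply NoDup_nodup].
  rewrite <- (heads_Delta lam U HUs). apply (submultiset_of_ldiv lam), Hmin.
  - exact (Delta_path lam U HUs).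
  - intros f Hf. destruct (HF f Hf) as [Hfp HfN].
    apply ldiv_of_submultiset; [exact Hfp|exact (Delta_path lam U HUs)|].
    rewrite (heads_Delta lam U HUs). apply (NoDup_incl_submultiset _ _ HfN).
    intros x Hx. apply HU. eauto.
Qed.

Lemma InE_path lam w : InE s t l r lam w -> is_path s t lam w.
Proof.
  induction 1 as [x|lam F m _ _ [Hm _]|lam u v _ IH Huv]; [simpl; auto|exact Hm|].
  exact (proj1 (cequiv_path _ _ _ Huv) IH).
Qed.

Lemma InE_heads_NoDup lam w : InE s t l r lam w -> NoDup (heads w).
Proof.
  induction 1 as [x|lam F m HF IH Hm|lam u v Hu IH Huv].
  - apply NoDup_cons; [auto|constructor].
  - apply (right_lcm_heads_NoDup lam F m); [|exact Hm].
    intros f Hf. split; [exact (InE_path _ _ (HF f Hf))|exact (IH f Hf)].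
  - exact (Permutation_NoDup (cequiv_heads _ _ _ Huv (InE_path _ _ Hu)) IH).
Qed.

Lemma InE_nil lam : InE s t l r lam [].
Proof.
  apply (@InE_lcm _ _ s t l r lam []); [intros f []|].
  split; [constructor|split; [intros f []|]].
  intros m Hm _. split; [constructor|split; [exact Hm|]].
  exists m. split; [exact Hm|apply rst_refl].
Qed.

Lemma InE_Delta lam I : NoDup I -> (forall x, In x I -> s x = lam) ->
  InE s t l r lam (Delta s t l I).
Proof.
  intros HN HI. apply (@InE_lcm _ _ s t l r lam (map (fun x => [x]) I)).
  - intros f Hf. apply in_map_iff in Hf as [x [<- Hx]]. rewrite <- (HI x Hx). apply InE_gen.
  - exact (Delta_right_lcm lam I HN HI).
Qed.

End HeadsInvariant.

Theorem proposition5p10 (L A : Type) (s t : A -> L) (l r : A -> A -> A)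
  (Hyb : qYB s t l r) (Hinv : involutive s t l r) (Hnd : nondegenerate s t l r) :
  forall (lam : L) (w : list A),
    InE s t l r lam w <->
    (cequiv s t l r w [] \/
     exists I : list A, I <> [] /\ NoDup I /\ (forall x, In x I -> s x = lam) /\
       cequiv s t l r w (Delta s t l I)).
Proof.
  intros lam w. split.
  - intros Hw. destruct w as [|x w']; [left; apply rst_refl|right].
    pose proof (InE_path Hyb _ _ Hw) as Hp.
    set (I := heads (l := l) (x :: w')).
    assert (HI : forall y, In y I -> s y = lam) by exact (fun y => heads_src Hyb _ _ _ Hp).
    exists I. split; [discriminate|]. split; [exact (InE_heads_NoDup Hyb Hinv Hnd _ _ Hw)|].
    split; [exact HI|].
    apply (cequiv_of_heads_perm Hyb Hinv Hnd lam); [exact Hp|exact (Delta_path Hnd _ _ HI)|].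
    now rewrite (heads_Delta Hnd lam I HI).
  - intros [Hw|[I [_ [HN [HI Hw]]]]]; eapply InE_equiv, rst_sym, Hw.
    + apply InE_nil.
    + exact (InE_Delta Hyb Hinv Hnd lam I HN HI).
Qed.
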